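(* Let $l\ge1$. Let $\mathcal I_e(l)$ (resp. $\mathcal I_o(l)$) denote the set of $l\times l$ diagonal matrices whose diagonal entries are each $1$ or $-1$ and which have an even (resp. odd) number of entries $-1$. Then for every $x\in\mathbb{R}$ and every $l\times l$ matrix $A$, $$\sum_{\overline I\in\mathcal I_e(l)}\det(xI+\overline IA)=2^{l-1}(x^l+\det A),\qquad \sum_{\overline I\in\mathcal I_o(l)}\det(xI+\overline IA)=2^{l-1}(x^l-\det A).$$
   Context: $I$ denotes the $l\times l$ identity matrix. *)

From mathcomp Require Import all_boot all_order all_algebra.
From mathcomp Require Import reals.
Set Implicit Arguments. Unset Strict Implicit. Unset Printing Implicit Defensive.
Import GRing.Theory Num.Theory.
Local Open Scope ring_scope.

(* Every diagonal matrix with entries in {1,-1} is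
   sign_mx s for exactly one s (the map is injective), so summing over
   s : {ffun 'I_l -> bool} with an even (odd) number of [true] is summing over
   I_e(l) (resp. I_o(l)). *)
Definition sign_mx (R : ringType) (l : nat) (s : {ffun 'I_l -> bool}) : 'M[R]_l :=
  diag_mx (\row_i ((-1) ^+ s i)).

Definition num_neg (l : nat) (s : {ffun 'I_l -> bool}) : nat := #|[set i | s i]|.

From mathcomp Require Import all_boot all_order all_algebra.
From mathcomp Require Import reals.
From mathcomp Require Import ring.
Import GRing.Theory Num.Theory.
Local Open Scope ring_scope.

(* Row i of [B + sign_mx s *m A] is row i of B plus or minus row i of A, so in
   the Leibniz expansion of the determinant each product over i is a product of
   binomials [B i (σ i) +- A i (σ i)].  Summing over all sign choices keeps only
   the [B]-part, summing with the weight [(-1) ^+ num_neg s] only the [A]-part;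
   either way a factor 2 appears for every row.  Hence the plain sum is
   [2 ^ l * det B], the signed one [2 ^ l * det A], and the sums over even and
   odd sign matrices are half their sum and half their difference. *)

Section SignSums.

Variables (R : comNzRingType) (l : nat).
Local Notation signs := {ffun 'I_l -> bool}.
Implicit Types (s : signs) (B A : 'M[R]_l).

Lemma sign_num_neg s : (-1) ^+ num_neg s = \prod_i ((-1) ^+ s i : R).
Proof.
rewrite /num_neg -prodr_const (big_mkcond (fun i => i \in [set i | s i])) /=.
by apply: eq_bigr => i _; rewrite inE; case: (s i).
Qed.

Lemma sum_ffun_prod (F : 'I_l -> bool -> R) :
  \sum_(s : signs) \prod_i F i (s i) = \prod_i (F i true + F i false).
Proof. by rewrite -bigA_distr_bigA; apply: eq_bigr => i _; rewrite big_bool. Qed.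

Lemma sum_prod_add_sign (F G : 'I_l -> R) :
  \sum_(s : signs) \prod_i (F i + (-1) ^+ s i * G i) = 2 ^+ l * \prod_i F i.
Proof.
rewrite (sum_ffun_prod (fun i b => F i + (-1) ^+ b * G i)).
rewrite -[l in 2 ^+ l]card_ord -prodr_const -big_split /=.
by apply: eq_bigr => i _; rewrite expr1 expr0; ring.
Qed.

Lemma sum_signed_prod_add_sign (F G : 'I_l -> R) :
  \sum_(s : signs) (-1) ^+ num_neg s * \prod_i (F i + (-1) ^+ s i * G i)
    = 2 ^+ l * \prod_i G i.
Proof.
under [LHS]eq_bigr => s _ do rewrite sign_num_neg -big_split /=.
rewrite (sum_ffun_prod (fun i b => (-1) ^+ b * (F i + (-1) ^+ b * G i))).
rewrite -[l in 2 ^+ l]card_ord -prodr_const -big_split /=.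
by apply: eq_bigr => i _; rewrite expr1 expr0; ring.
Qed.

Lemma sign_mx_mulE s B A i j :
  (B + sign_mx R s *m A) i j = B i j + (-1) ^+ s i * A i j.
Proof. by rewrite /sign_mx mul_diag_mx !mxE. Qed.

Lemma sum_det_add_sign_mx B A :
  \sum_(s : signs) \det (B + sign_mx R s *m A) = 2 ^+ l * \det B.
Proof.
rewrite /determinant exchange_big mulr_sumr /=; apply: eq_bigr => σ _.
under eq_bigr => s _ do under eq_bigr => i _ do rewrite sign_mx_mulE.
by rewrite -mulr_sumr sum_prod_add_sign mulrCA.
Qed.

Lemma sum_signed_det_add_sign_mx B A :
  \sum_(s : signs) (-1) ^+ num_neg s * \det (B + sign_mx R s *m A) = 2 ^+ l * \det A.
Proof.
rewrite /determinant mulr_sumr.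
under eq_bigr => s _ do rewrite mulr_sumr.
rewrite exchange_big /=; apply: eq_bigr => σ _.
under eq_bigr => s _ do rewrite mulrCA.
under eq_bigr => s _ do under eq_bigr => i _ do rewrite sign_mx_mulE.
by rewrite -mulr_sumr sum_signed_prod_add_sign mulrCA.
Qed.

Lemma sum_signed_even_odd (f : signs -> R) :
  \sum_(s : signs) (-1) ^+ num_neg s * f s
    = \sum_(s | ~~ odd (num_neg s)) f s - \sum_(s | odd (num_neg s)) f s.
Proof.
rewrite (bigID (fun s => odd (num_neg s))) /= addrC -sumrN.
congr (_ + _); apply: eq_bigr => s hs; rewrite -signr_odd.
  by rewrite (negbTE hs) mul1r.
by rewrite hs mulN1r.
Qed.

End SignSums.

Theorem lemma2p1 (R : realType) (l : nat) (hl : (1 <= l)%N) (x : R) (A : 'M[R]_l) :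
  \sum_(s : {ffun 'I_l -> bool} | ~~ odd (num_neg s))
      \det (x%:M + sign_mx R s *m A) = 2 ^+ l.-1 * (x ^+ l + \det A)
  /\
  \sum_(s : {ffun 'I_l -> bool} | odd (num_neg s))
      \det (x%:M + sign_mx R s *m A) = 2 ^+ l.-1 * (x ^+ l - \det A).
Proof.
have sum_all := sum_det_add_sign_mx _ _ x%:M A.
have sum_signed := sum_signed_det_add_sign_mx _ _ x%:M A.
rewrite (bigID (fun s => odd (num_neg s))) /= det_scalar in sum_all.
rewrite sum_signed_even_odd in sum_signed.
set E := \sum_(s | ~~ odd _) _ in sum_all sum_signed *.
set O := \sum_(s | odd _) _ in sum_all sum_signed *.
have two_neq0 : (2 : R) != 0 by rewrite pnatr_eq0.
have two_exp : (2 : R) ^+ l = 2 * 2 ^+ l.-1 by rewrite -exprS prednK.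
rewrite two_exp in sum_all sum_signed.
split; apply: (mulfI two_neq0); rewrite mulrA.
  by rewrite mulrDr -sum_all -sum_signed; ring.
by rewrite mulrBr -sum_all -sum_signed; ring.
Qed.
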